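(* If $G$ is a finite simple graph with chromatic number $\chi(G)=3$, then $\mathrm{Hom}(G,K_3)$ is disconnected.
   Context: $K_3$ is the complete graph on 3 vertices. For graphs $G,H$, the homomorphism complex $\mathrm{Hom}(G,H)$ is the polyhedral complex whose cells are functions $\eta:V(G)\to 2^{V(H)}\setminus\{\varnothing\}$ such that whenever $\{x,y\}\in E(G)$ we have $\eta(x)\times\eta(y)\subseteq E(H)$; the cell $\eta$ is a product of simplices of dimension $\sum_{v}(|\eta(v)|-1)$, with face relation $\eta\subseteq\tau$ iff $\eta(v)\subseteq\tau(v)$ for all $v$. Its 0-cells are the graph homomorphisms $G\to H$. Disconnected means the (geometric realization of the) complex is nonempty and has more than one path component. *)

From HB Require Import structures.
From mathcomp Require Import all_boot all_order all_algebra.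
From mathcomp Require Import all_classical all_reals all_analysis.
Set Implicit Arguments. Unset Strict Implicit. Unset Printing Implicit Defensive.
Import Order.TTheory GRing.Theory Num.Theory numFieldNormedType.Exports.
Local Open Scope ring_scope.
Local Open Scope classical_set_scope.

Definition simple_graph (T : finType) (e : rel T) : Prop :=
  symmetric e /\ irreflexive e.

Definition colorableb (T : finType) (e : rel T) (k : nat) : bool :=
  [exists f : {ffun T -> 'I_k}, [forall x, [forall y, e x y ==> (f x != f y)]]].

(* Chromatic number: least k with a proper k-colouring (for an irreflexive
   relation such a k <= #|T| always exists). *)
Definition chromatic_number (T : finType) (e : rel T) : nat :=
  find (colorableb e) (iota 0 #|T|.+1).

Definition K3_edge : rel 'I_3 := fun i j => i != j.

(* Geometric realization of Hom(G, K_3), as the union of the closed cells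
   (products of simplices) inside the product over V(G) of the standard
   simplex on V(K_3) (in R^(V(G) x V(K_3))): a point is p with p v a
   probability vector on V(K_3) for every v, whose support function
   eta(v) = {i | p v i > 0} is a cell, i.e. for every edge {x,y},
   supp p(x) x supp p(y) is contained in E(K_3). *)
Definition hom_K3_realization (R : realType) (T : finType) (e : rel T)
  : set (T -> 'I_3 -> R) :=
  [set p | (forall v i, 0 <= p v i) /\
           (forall v, \sum_(i < 3) p v i = 1) /\
           (forall x y, e x y -> forall i j : 'I_3,
               0 < p x i -> 0 < p y j -> K3_edge i j)].

(* A path in X (a subset of R^(T x 'I_3)) from a to b: a map [0,1] -> X,
   continuous in every coordinate (= continuous for the product topology). *)
Definition path_in (R : realType) (T : finType) (X : set (T -> 'I_3 -> R))
  (a b : T -> 'I_3 -> R) : Prop :=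
  exists g : R -> T -> 'I_3 -> R,
    (forall v i, {within `[0%R, 1%R], continuous (fun t : R => g t v i : R)}) /\
    (forall t, t \in `[0%R, 1%R] -> X (g t)) /\
    g 0%R = a /\ g 1%R = b.

Definition disconnected_space (R : realType) (T : finType)
  (X : set (T -> 'I_3 -> R)) : Prop :=
  (exists a, X a) /\ exists a b, X a /\ X b /\ ~ path_in X a b.

From HB Require Import structures.
From mathcomp Require Import all_boot all_order all_algebra.
From mathcomp Require Import all_classical all_reals all_analysis.
From mathcomp Require Import ring lra.
Set Implicit Arguments. Unset Strict Implicit. Unset Printing Implicit Defensive.
Import Order.TTheory GRing.Theory Num.Theory numFieldNormedType.Exports.
Local Open Scope ring_scope.

(* Orient the triangle K_3 = Z/3 by [turn i j = +1] if [j = i + 1] and [-1]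
   if [j = i - 1].  For a point [p] of Hom(G, K_3) and a closed walk of G,
   the winding number [\sum_(uv in walk) \sum_(i,j) p u i * p v j * turn i j]
   is continuous in [p].  On each cell it differs from
   [\sum_(uv in walk) turn (h u) (h v)] by a coboundary, where [h v] is any
   colour in the support of [p v]; so it is a sum of one sign per edge of the
   walk, hence nonzero on an odd closed walk.  Such a walk exists since G is
   not 2-colourable.  The mirror symmetry [i |-> -i] of K_3 reverses the
   orientation, so a 3-colouring [f] and its mirror image [-f] have opposite
   winding numbers, and by the intermediate value theorem no path in
   Hom(G, K_3) joins them. *)

Lemma ord3_cases (i : 'I_3) : [\/ i = 0, i = 1 | i = 2].
Proof.
by case: i => [[|[|[|//]]] ?]; [constructor 1|constructor 2|constructor 3];
  apply: val_inj.
Qed.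

Section TriangleOrientation.
Variable R : realFieldType.

Lemma sum_ord3 (F : 'I_3 -> R) : \sum_(i < 3) F i = F 0 + F 1 + F 2.
Proof.
by rewrite !big_ord_recr big_ord0 /= add0r; do 3 f_equal; apply: val_inj.
Qed.

Definition turn (i j : 'I_3) : R :=
  if i == j then 0 else if j == i + 1 then 1 else -1.

Lemma turn_opp i j : turn (- i) (- j) = - turn i j.
Proof.
by case: i j => [[|[|[|//]]] ?] [[|[|[|//]]] ?]; rewrite /turn /= ?oppr0 ?opprK.
Qed.

Lemma turn_pm1 i j : i != j -> turn i j = 1 \/ turn i j = -1.
Proof. by rewrite /turn => /negbTE ->; case: ifP; [left|right]. Qed.

Definition turn_form (p q : 'I_3 -> R) : R :=
  \sum_(i < 3) \sum_(j < 3) p i * q j * turn i j.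

Definition turn_potential (p : 'I_3 -> R) (a : 'I_3) : R :=
  2 * \sum_(c < 3) p c * turn c a.

Lemma turn_form_cobound (p q : 'I_3 -> R) (a b : 'I_3) :
  (forall i, 0 <= p i) -> (forall i, 0 <= q i) ->
  \sum_(i < 3) p i = 1 -> \sum_(i < 3) q i = 1 ->
  (forall i, p i * q i = 0) -> 0 < p a -> 0 < q b ->
  turn_form p q = turn a b + turn_potential q b - turn_potential p a.
Proof.
move=> p_ge0 q_ge0; rewrite /turn_form /turn_potential !sum_ord3.
move=> p1 q1 pq pa qb.
have qa : q a = 0 by apply/eqP; move/eqP: (pq a); rewrite mulf_eq0 gt_eqF.
have pb : p b = 0.
  by apply/eqP; move/eqP: (pq b); rewrite mulf_eq0 (gt_eqF qb) orbF.
have := pq 0; have := pq 1; have := pq 2.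
have := p_ge0 0; have := p_ge0 1; have := p_ge0 2.
have := q_ge0 0; have := q_ge0 1; have := q_ge0 2.
by case: (ord3_cases a) pa qa pb => ->; case: (ord3_cases b) qb => -> /=;
  rewrite /turn /= => *; nra.
Qed.

End TriangleOrientation.

Arguments turn {R} i j.

Section WalkSums.
Variables (R : numDomainType) (T : Type) (e : rel T).

Fixpoint walk_sum (F : T -> T -> R) (x : T) (s : seq T) : R :=
  if s is y :: s' then F x y + walk_sum F y s' else 0.

Lemma walk_sum_cobound (F G : T -> T -> R) (phi : T -> R) x s :
  path e x s -> (forall u v, e u v -> G u v = F u v + phi v - phi u) ->
  walk_sum G x s = walk_sum F x s + phi (last x s) - phi x.
Proof.
move=> + G_def; elim: s x => [|y s IHs] x /=; first by move=> _; ring.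
by move=> /andP[exy ys]; rewrite IHs // G_def //; ring.
Qed.

Lemma walk_sum_opp (F : T -> T -> R) x s :
  walk_sum (fun u v => - F u v) x s = - walk_sum F x s.
Proof. by elim: s x => [|y s IHs] x /=; rewrite ?oppr0 // IHs opprD. Qed.

Lemma walk_sum_pm1 (F : T -> T -> R) x s :
  path e x s -> (forall u v, e u v -> F u v = 1 \/ F u v = -1) ->
  exists m, walk_sum F x s = (size s)%:R - (m.*2)%:R.
Proof.
move=> + F_pm1; elim: s x => [|y s IHs] x /=; first by exists 0%N; rewrite subr0.
move=> /andP[exy ys]; have [m ->] := IHs y ys.
case: (F_pm1 _ _ exy) => ->; [exists m | exists m.+1];
  rewrite ?doubleS !mulrS; ring.
Qed.

Lemma walk_sum_pm1_neq0 (F : T -> T -> R) x s :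
  path e x s -> (forall u v, e u v -> F u v = 1 \/ F u v = -1) ->
  odd (size s) -> walk_sum F x s != 0.
Proof.
move=> es F_pm1 odd_s; have [m ->] := walk_sum_pm1 es F_pm1.
by rewrite subr_eq0 eqr_nat; apply: contraTneq odd_s => ->; rewrite odd_double.
Qed.

End WalkSums.

Section Winding.
Variables (R : realType) (T : finType) (e : rel T).

Local Notation hom_K3 := (@hom_K3_realization R T e).

Definition winding (p : T -> 'I_3 -> R) (x : T) (s : seq T) : R :=
  walk_sum (fun u v => turn_form (p u) (p v)) x s.

Lemma hom_K3_support (p : T -> 'I_3 -> R) :
  hom_K3 p -> exists h : T -> 'I_3, forall v, 0 < p v (h v).
Proof.
move=> [p_ge0 [p_sum _]].
exists (fun v => odflt 0 [pick i | 0 < p v i]) => v.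
case: pickP => //= p_le0; have p0 i : p v i = 0.
  by apply/eqP; rewrite eq_le p_ge0 andbT leNgt p_le0.
by move: (p_sum v); rewrite sum_ord3 !p0 !add0r => /eqP; rewrite eq_sym oner_eq0.
Qed.

Lemma hom_K3_disjoint (p : T -> 'I_3 -> R) u v i :
  hom_K3 p -> e u v -> p u i * p v i = 0.
Proof.
move=> [p_ge0 [_ p_edge]] euv; apply/eqP; rewrite mulf_eq0.
apply: contraT; rewrite negb_or => /andP[pu pv].
have := p_edge _ _ euv i i; rewrite /K3_edge eqxx !lt0r pu pv !p_ge0.
by move=> /(_ isT isT).
Qed.

Lemma winding_support (p : T -> 'I_3 -> R) (h : T -> 'I_3) x s :
  hom_K3 p -> (forall v, 0 < p v (h v)) -> path e x s -> last x s = x ->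
  winding p x s = walk_sum (fun u v => turn (h u) (h v)) x s.
Proof.
move=> p_hom h_supp es closed_s; have [p_ge0 [p_sum _]] := p_hom.
rewrite /winding (walk_sum_cobound (F := fun u v => turn (h u) (h v))
  (phi := fun v => turn_potential (p v) (h v)) es) ?closed_s ?addrK // => u v euv.
by apply: turn_form_cobound => // i; apply: hom_K3_disjoint.
Qed.

Lemma winding_neq0 (p : T -> 'I_3 -> R) x s :
  hom_K3 p -> path e x s -> last x s = x -> odd (size s) -> winding p x s != 0.
Proof.
move=> p_hom es closed_s odd_s; have [h h_supp] := hom_K3_support p_hom.
rewrite (winding_support p_hom h_supp es closed_s).
apply: (walk_sum_pm1_neq0 es _ odd_s) => u v euv; apply: turn_pm1.
by case: p_hom => _ [_ p_edge]; exact: p_edge _ _ euv _ _ (h_supp u) (h_supp v).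
Qed.

Definition colouring_point (h : T -> 'I_3) : T -> 'I_3 -> R :=
  fun v i => if h v == i then 1 else 0.

Lemma colouring_point_supp (h : T -> 'I_3) v : 0 < colouring_point h v (h v).
Proof. by rewrite /colouring_point eqxx ltr01. Qed.

Lemma colouring_point_hom (h : T -> 'I_3) :
  (forall x y, e x y -> h x != h y) -> hom_K3 (colouring_point h).
Proof.
rewrite /colouring_point => h_proper; split; [|split].
- by move=> v i; case: ifP.
- by move=> v; rewrite sum_ord3; case: (ord3_cases (h v)) => ->; rewrite /=; lra.
- move=> x y exy i j; do 2![case: eqP => [<-|]; last by rewrite ltxx].
  by move=> _ _; apply: h_proper.
Qed.

Lemma winding_colouring_point_opp (f : T -> 'I_3) x s :
  (forall x y, e x y -> f x != f y) -> path e x s -> last x s = x ->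
  winding (colouring_point (fun v => - f v)) x s =
  - winding (colouring_point f) x s.
Proof.
move=> f_proper es closed_s.
have mf_proper u v : e u v -> - f u != - f v.
  by move=> /f_proper; rewrite eqr_opp.
rewrite !(winding_support (colouring_point_hom _) (colouring_point_supp _)) //.
by rewrite -walk_sum_opp; under eq_fun do under eq_fun do rewrite turn_opp.
Qed.

End Winding.

Section WindingContinuity.
Variable R : realType.
Local Open Scope classical_set_scope.

Lemma within_continuousD (A : set R) (f g : R -> R) :
  {within A, continuous f} -> {within A, continuous g} ->
  {within A, continuous (fun t => f t + g t)}.
Proof. by move=> f_cont g_cont t; exact: continuousD (f_cont t) (g_cont t). Qed.

Lemma within_continuousM (A : set R) (f g : R -> R) :
  {within A, continuous f} -> {within A, continuous g} ->
  {within A, continuous (fun t => f t * g t)}.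
Proof. by move=> f_cont g_cont t; exact: continuousM (f_cont t) (g_cont t). Qed.

Lemma within_continuous_sum (A : set R) (I : Type) (r : seq I)
    (F : I -> R -> R) :
  (forall i, {within A, continuous F i}) ->
  {within A, continuous (fun t => \sum_(i <- r) F i t)}.
Proof.
move=> F_cont; elim: r => [|i r IHr].
  by under eq_fun do rewrite big_nil; exact: cst_continuous.
by under eq_fun do rewrite big_cons; exact: within_continuousD.
Qed.

Lemma winding_continuous (T : finType) (g : R -> T -> 'I_3 -> R) x s :
  (forall v i, {within `[0, 1], continuous (fun t => g t v i)}) ->
  {within `[0, 1], continuous (fun t => winding (g t) x s)}.
Proof.
move=> g_cont; elim: s x => [|y s IHs] x /=; first exact: cst_continuous.
apply: within_continuousD (IHs y); do 2!apply: within_continuous_sum => ?.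
apply: within_continuousM; last exact: cst_continuous.
exact: within_continuousM.
Qed.

Lemma ivt_opposite_ends (S : R -> R) :
  {within `[0, 1], continuous S} -> S 1 = - S 0 ->
  exists2 c, c \in `[0, 1] & S c = 0.
Proof.
move=> S_cont S1; have [|c c01 Sc0] := IVT (v := 0) ler01 S_cont.
  by rewrite S1; case: (lerP 0 (S 0)) => S0;
    rewrite ge_min le_max ?oppr_le0 ?oppr_ge0 ?S0 ?(ltW S0) ?orbT.
by exists c; rewrite ?inE.
Qed.

End WindingContinuity.

Section Colourings.
Variables (T : finType) (e : rel T).

Lemma colorableP k :
  reflect (exists f : T -> 'I_k, forall x y, e x y -> f x != f y)
          (colorableb e k).
Proof.
apply: (iffP existsP) => [[f /forallP f_proper]|[f f_proper]].
  by exists f => x y exy; have /forallP/(_ y) := f_proper x; rewrite exy.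
by exists [ffun v => f v]; apply/'forall_forallP => x y; apply/implyP;
  rewrite !ffunE; apply: f_proper.
Qed.

Lemma colorable_card : irreflexive e -> colorableb e #|T|.
Proof.
move=> e_irr; apply/colorableP; exists enum_rank => x y.
by apply: contraTneq => /enum_rank_inj ->; rewrite e_irr.
Qed.

Lemma colorable_chromatic_number :
  irreflexive e -> colorableb e (chromatic_number e).
Proof.
move=> e_irr; have has_col : has (colorableb e) (iota 0 #|T|.+1).
  apply/hasP; exists #|T|; last exact: colorable_card.
  by rewrite mem_iota ltnSn.
have := nth_find 0%N has_col; rewrite nth_iota //.
by move: has_col; rewrite has_find size_iota.
Qed.

Lemma not_colorable_lt_chromatic_number k :
  (k < chromatic_number e)%N -> ~~ colorableb e k.
Proof.
move=> k_lt; have := before_find 0%N k_lt; rewrite nth_iota.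
  by rewrite add0n => ->.
by apply: leq_trans k_lt _; rewrite -(size_iota 0 #|T|.+1) find_size.
Qed.

End Colourings.

Section OddClosedWalks.
Variables (T : finType) (e : rel T).

Definition parity_cover : rel (T * bool) :=
  fun u v => e u.1 v.1 && (u.2 != v.2).

Lemma parity_cover_path u s :
  path parity_cover u s -> path e u.1 (map fst s).
Proof.
by elim: s u => [|w s IHs] u //= /andP[/andP[euw _] ws]; rewrite euw IHs.
Qed.

Lemma parity_cover_last u s :
  path parity_cover u s -> (last u s).2 = odd (size s) (+) u.2.
Proof.
elim: s u => [|w s IHs] u //= /andP[/andP[_ uw] ws]; rewrite IHs //.
by move: uw; case: u.2; case: w.2; case: odd.
Qed.

Lemma parity_cover_lift x s b :
  path e x s -> exists b', connect parity_cover (x, b) (last x s, b').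
Proof.
elim: s x b => [|y s IHs] x b /=; first by exists b.
move=> /andP[exy ys]; have [b' yb'] := IHs y (~~ b) ys; exists b'.
apply: connect_trans yb'; apply: connect1.
by rewrite /parity_cover /= exy; case: b.
Qed.

Lemma odd_closed_walk_of_cover_loop v :
  connect parity_cover (v, false) (v, true) ->
  exists x s, [/\ path e x s, last x s = x & odd (size s)].
Proof.
move=> /connectP[s cover_s last_s]; exists v, (map fst s); split.
- exact: parity_cover_path cover_s.
- by rewrite (last_map fst s (v, false)) -last_s.
- by have := parity_cover_last cover_s; rewrite -last_s size_map addbF.
Qed.

Hypothesis e_sym : symmetric e.

Lemma colorable2_of_no_cover_loop :
  (forall v, ~~ connect parity_cover (v, false) (v, true)) -> colorableb e 2.
Proof.
move=> no_loop; have cover_sym : connect_sym parity_cover.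
  apply: sym_connect_sym => -[u a] [v b].
  by rewrite /parity_cover /= e_sym eq_sym.
pose c v := connect parity_cover (fingraph.root e v, false) (v, false).
have reach_root v :
    exists b, connect parity_cover (fingraph.root e v, false) (v, b).
  have /connectP[s es v_last] : connect e (fingraph.root e v) v.
    by rewrite (sym_connect_sym e_sym) connect_root.
  by have [b] := parity_cover_lift false es; rewrite -v_last; exists b.
have c_flip x y : e x y -> c y = ~~ c x.
  move=> exy; have root_xy : fingraph.root e y = fingraph.root e x.
    by apply/esym/(fingraph.rootP (sym_connect_sym e_sym))/connect1.
  have step b : connect parity_cover (fingraph.root e x, false) (x, b) ->
                connect parity_cover (fingraph.root e y, false) (y, ~~ b).
    move=> xb; rewrite root_xy; apply: connect_trans xb (connect1 _).
    by rewrite /parity_cover /= exy; case: b.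
  case cx: (c x) => /=.
    apply: (contraNF _ (no_loop y)) => cy; rewrite /c cover_sym in cy.
    exact: connect_trans cy (step _ cx).
  have [[] xb] := reach_root x; last by rewrite /c xb in cx.
  exact: step _ xb.
apply/colorableP; exists (fun v => if c v then 1 else 0) => x y /c_flip ->.
by case: (c x).
Qed.

Lemma odd_closed_walk :
  ~~ colorableb e 2 -> exists x s, [/\ path e x s, last x s = x & odd (size s)].
Proof.
move=> not_col2; have [v /odd_closed_walk_of_cover_loop //|no_loop] :=
  pickP (fun v => connect parity_cover (v, false) (v, true)).
by case/negP: not_col2; apply: colorable2_of_no_cover_loop => v; rewrite no_loop.
Qed.

End OddClosedWalks.

Local Close Scope ring_scope.

Theorem theorem4p1 (R : realType) (T : finType) (e : rel T) :
  simple_graph e -> chromatic_number e = 3 ->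
  disconnected_space (@hom_K3_realization R T e).
Proof.
move=> [e_sym e_irr] chi3.
have /colorableP[f f_proper] : colorableb e 3.
  by rewrite -chi3; exact: colorable_chromatic_number.
have [x [s [es closed_s odd_s]]] : exists x s,
    [/\ path e x s, last x s = x & odd (size s)].
  apply: odd_closed_walk => //.
  by apply: not_colorable_lt_chromatic_number; rewrite chi3.
have mf_proper u v : e u v -> (- f u != - f v)%R.
  by move=> /f_proper; rewrite eqr_opp.
split; first by exists (colouring_point R f); exact: colouring_point_hom.
exists (colouring_point R f), (colouring_point R (fun v => - f v)%R).
split; [exact: colouring_point_hom | split; first exact: colouring_point_hom].
move=> [g [g_cont [g_hom [g0 g1]]]].
have [|c c01 wc0] :=
  ivt_opposite_ends (winding_continuous (x := x) (s := s) g_cont).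
  by rewrite g0 g1 (winding_colouring_point_opp R f_proper es closed_s).
by move: wc0; apply/eqP; apply: winding_neq0 (g_hom c c01) es closed_s odd_s.
Qed.
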